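(* Let $q\ge4$ be even, let $\alpha,\beta\in\mathbb{F}_{q^2}$ with $\alpha\neq0$, $\beta\notin\mathbb{F}_q$ and $\alpha^{q+1}/(\beta^q+\beta)^2$ of absolute trace $0$, let $R=(0,\delta,1)$ and $U_\infty=(1,0,0)$. If $\ell$ is a line of $\mathrm{PG}(2,q^2)$ through $U_\infty$, then $\ell$ meets $\mathrm{pedal}(R)$ in at most two points.
   Context: Points of $\mathrm{PG}(2,q^2)$ have homogeneous coordinates $(x,y,z)$. $\delta\in\mathbb{F}_{q^2}\setminus\mathbb{F}_q$ satisfies $\delta^q=1+\delta$ and $\delta^2=v+\delta$ with $v\in\mathbb{F}_q$, $v\ne1$, of absolute trace $1$. $\mathcal U_{\alpha\beta}=\{(x,\alpha x^2+\beta x^{q+1}+r,1): x\in\mathbb{F}_{q^2}, r\in\mathbb{F}_q\}\cup\{(0,1,0)\}$, which under the hypotheses is a unital (a set of $q^3+1$ points meeting every line in $1$ or $q+1$ points), and $R\notin\mathcal U_{\alpha\beta}$. For a point $P$ not on the unital, $\mathrm{pedal}(P)$ is the set of points of contact of the $q+1$ tangent lines (lines meeting the unital in exactly one point) through $P$. *)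

From HB Require Import structures.
From mathcomp Require Import all_boot all_order all_algebra all_field.
Set Implicit Arguments. Unset Strict Implicit. Unset Printing Implicit Defensive.
Import Order.TTheory GRing.Theory.
Local Open Scope ring_scope.

Section PG.
Variable F : finFieldType.

Definition vec3 := (F * F * F)%type.

(* canonical representative of the projective point spanned by a nonzero
   triple: the last nonzero coordinate is scaled to 1 *)
Definition normalize (P : vec3) : vec3 :=
  let: (x, y, z) := P in
  if z != 0 then (x / z, y / z, 1)
  else if y != 0 then (x / y, 1, 0)
  else if x != 0 then (1, 0, 0) else (0, 0, 0).

(* points (and, dually, lines) of PG(2,F), given by canonical representatives *)
Definition is_point (P : vec3) : bool :=
  (P != (0, 0, 0)) && (normalize P == P).

Definition incident (L P : vec3) : bool :=
  L.1.1 * P.1.1 + L.1.2 * P.1.2 + L.2 * P.2 == 0.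

Variable q : nat.

Definition inFq (x : F) : bool := x ^+ q == x.

Definition abs_trace (h : nat) (x : F) : F := \sum_(i < h) x ^+ (2 ^ i).

Definition unital (alpha beta : F) : {set vec3} :=
  [set P : vec3 | [exists x : F, exists r : F,
      inFq r && (P == (x, alpha * x ^+ 2 + beta * x ^+ q.+1 + r, 1))]
    || (P == (0, 1, 0))].

Definition tangent (alpha beta : F) (L : vec3) : bool :=
  is_point L && (#|[set P in unital alpha beta | incident L P]| == 1%N).

Definition pedal (alpha beta : F) (R : vec3) : {set vec3} :=
  [set P in unital alpha beta |
     [exists L : vec3, [&& tangent alpha beta L, incident L R & incident L P]]].

End PG.

From HB Require Import structures.
From mathcomp Require Import all_boot all_order all_algebra all_field.
From mathcomp Require Import ring.
Import Order.TTheory GRing.Theory.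
Set Implicit Arguments. Unset Strict Implicit. Unset Printing Implicit Defensive.
Local Open Scope ring_scope.

(* Write b = beta^q + beta, a nonzero element of F_q. Along an affine line
   y = m x + c, moving from a point x0 of the unital to x0 + u changes
   y + alpha x^2 + beta x^(q+1) by some d with
   d^q + d = Q(u) + (e u)^q + e u,  where e = m + b x0^q and
   Q(w) = Tr(alpha w^2) + b N(w).  The trace condition on alpha^(q+1) / b^2
   makes Q anisotropic, so for e <> 0 the choice u = w / Q(w), w = delta / e,
   gives d in F_q and hence a second point of the unital on the line.  So a
   line through R = (0, delta, 1) tangent at (x0, y0, 1) has slope b x0^q,
   i.e. b x0^(q+1) = y0 + delta.  On a line y = c through U_infty this fixes
   N(x) = k, and then s = alpha x^2 has both s + s^q and s s^q determined:
   s is a root of a fixed quadratic, and x |-> alpha x^2 is injective.  The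
   line at infinity meets the unital only in (0, 1, 0). *)

Lemma card_quadratic_roots (R : finIdomainType) (s p : R) :
  (#|[set t : R | (t ^+ 2 + s * t + p == 0)%R]| <= 2)%N.
Proof.
pose f : {poly R} := ('X + s%:P) * 'X + p%:P.
have size_f : size f = 3%N.
  by rewrite size_MXaddC -size_poly_eq0 size_XaddC.
have f_neq0 : f != 0 by rewrite -size_poly_eq0 size_f.
rewrite -ltnS -size_f cardE; apply: max_poly_roots => //; last exact: enum_uniq.
apply/allP => t; rewrite mem_enum inE /root /f !hornerE => /eqP <-.
by rewrite mulrDl -expr2 mulrC.
Qed.

Section Char2.
Variable R : comNzRingType.
Hypothesis R2 : 2 \in [pchar R].

(* Lets [ring], which ignores the characteristic, prove identities of characteristic 2. *)
Lemma eq_double_pchar2 (x y z : R) : x = y + 2 * z -> x = y.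
Proof. by rewrite mulr_natl mulr2n addrr_pchar2 // addr0. Qed.

Lemma addr_eq0_pchar2 (x y : R) : (x + y == 0) = (x == y).
Proof. by rewrite addr_eq0 oppr_pchar2. Qed.

Lemma exprD_pchar2X n (x y : R) : (x + y) ^+ (2 ^ n) = x ^+ (2 ^ n) + y ^+ (2 ^ n).
Proof.
by apply: exprDn_pchar; rewrite pnatX (eq_pnat _ (pcharf_eq R2)) pnat_id.
Qed.

End Char2.

Lemma abs_trace_sqr_add (F : finFieldType) (F2 : 2 \in [pchar F]) n (z : F) :
  abs_trace n (z ^+ 2 + z) = z ^+ (2 ^ n) + z.
Proof.
elim: n => [|n IHn]; first by rewrite /abs_trace big_ord0 expr1 addrr_pchar2.
rewrite /abs_trace big_ord_recr /= -/(abs_trace n _) IHn exprD_pchar2X //.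
by rewrite -exprM -expnS addrC addrA addrK_pchar2.
Qed.

Section UnitalOverFq2.
Variables (h : nat) (F : finFieldType).
Hypothesis cardF : #|F| = (2 ^ h * 2 ^ h)%N.
Local Notation q := (2 ^ h)%N.

Lemma pchar2F : 2 \in [pchar F].
Proof. by apply: (card_finPcharP (n := h + h)); rewrite // cardF expnD. Qed.

Lemma frobD (x y : F) : (x + y) ^+ q = x ^+ q + y ^+ q.
Proof. exact: (exprD_pchar2X pchar2F). Qed.

Lemma frobK (x : F) : (x ^+ q) ^+ q = x.
Proof. by rewrite -exprM -cardF expf_card. Qed.

Lemma inFqD (x y : F) : inFq q x -> inFq q y -> inFq q (x + y).
Proof. by rewrite /inFq frobD => /eqP-> /eqP->. Qed.

Lemma inFqM (x y : F) : inFq q x -> inFq q y -> inFq q (x * y).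
Proof. by rewrite /inFq exprMn => /eqP-> /eqP->. Qed.

Lemma inFq_trace (x : F) : inFq q (x ^+ q + x).
Proof. by rewrite /inFq frobD frobK addrC. Qed.

Lemma inFq_norm (x : F) : inFq q (x ^+ q.+1).
Proof. by rewrite /inFq exprSr exprMn frobK mulrC -exprSr. Qed.

Lemma incident_affineE (a b' c' x y : F) : b' != 0 ->
  incident (a, b', c') (x, y, 1) = (y == a / b' * x + c' / b').
Proof.
move=> b'_neq0; rewrite /incident /= mulr1 addrAC addr_eq0_pchar2 ?pchar2F // eq_sym.
have -> : a * x + c' = b' * (a / b' * x + c' / b') by field.
by rewrite (inj_eq (mulfI b'_neq0)).
Qed.

Variables alpha beta : F.
Local Notation b := (beta ^+ q + beta).

Lemma trace_beta_neq0 : ~~ inFq q beta -> b != 0.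
Proof. by apply: contra; rewrite addr_eq0_pchar2 ?pchar2F. Qed.

Definition unital_poly (x y : F) := y + alpha * x ^+ 2 + beta * x ^+ q.+1.

Lemma unital_affineE (x y : F) :
  ((x, y, 1) \in unital q alpha beta) = inFq q (unital_poly x y).
Proof.
rewrite inE orbC xpair_eqE /= oner_eq0 andbF /=.
apply/existsP/idP => [[x' /existsP[r /andP[Fq_r /eqP[-> ->]]]] | Fq_y].
  suff -> : unital_poly x' (alpha * x' ^+ 2 + beta * x' ^+ q.+1 + r) = r by [].
  apply: (eq_double_pchar2 pchar2F (z := alpha * x' ^+ 2 + beta * x' ^+ q.+1)).
  rewrite /unital_poly; ring.
exists x; apply/existsP; exists (unital_poly x y); rewrite Fq_y /=; apply/eqP; congr (_, _, _).
apply: (eq_double_pchar2 pchar2F (z := - (alpha * x ^+ 2 + beta * x ^+ q.+1))).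
rewrite /unital_poly; ring.
Qed.

Lemma unital_cases (P : vec3 F) : P \in unital q alpha beta ->
  P = (0, 1, 0) \/ exists x y, P = (x, y, 1).
Proof.
rewrite inE => /orP[/existsP[x /existsP[r /andP[_ /eqP ->]]] | /eqP ->]; last by left.
by right; exists x, (alpha * x ^+ 2 + beta * x ^+ q.+1 + r).
Qed.

Definition qform (w : F) := (alpha * w ^+ 2) ^+ q + alpha * w ^+ 2 + b * w ^+ q.+1.

Lemma inFq_qform w : inFq q (qform w).
Proof. by rewrite inFqD ?inFqM ?inFq_trace ?inFq_norm. Qed.

Lemma qformZ (lam w : F) : inFq q lam -> qform (lam * w) = lam ^+ 2 * qform w.
Proof.
move=> /eqP Fq_lam; rewrite /qform !exprMn [lam ^+ q.+1]exprSr Fq_lam; ring.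
Qed.

Lemma unital_poly_line_incr (m c x0 u : F)
    (d := unital_poly (x0 + u) (m * (x0 + u) + c) + unital_poly x0 (m * x0 + c))
    (e := m + b * x0 ^+ q) :
  d ^+ q + d = qform u + (e * u) ^+ q + e * u.
Proof.
have -> : d = m * u + alpha * u ^+ 2 + beta * (x0 ^+ q * u + x0 * u ^+ q + u ^+ q * u).
  apply: (eq_double_pchar2 pchar2F
    (z := m * x0 + c + alpha * x0 ^+ 2 + alpha * x0 * u + beta * x0 ^+ q * x0)).
  by rewrite /d /unital_poly !exprSr frobD; ring.
by rewrite /e /qform !(frobD, exprMn, frobK) [u ^+ q.+1]exprSr; ring.
Qed.

Lemma unital_norm_root (x c k : F) : inFq q (unital_poly x c) -> x ^+ q.+1 = k ->
  let s := alpha * x ^+ 2 in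
  s ^+ 2 + (c ^+ q + c + b * k) * s + alpha ^+ q.+1 * k ^+ 2 = 0.
Proof.
move=> /eqP Fq_x xk s.
have Fq_k : k ^+ q = k by rewrite -xk (eqP (inFq_norm x)).
have sE : s = unital_poly x c + c + beta * k.
  apply/esym/(eq_double_pchar2 pchar2F (z := c + beta * k)).
  by rewrite /unital_poly xk /s; ring.
have trace_s : s ^+ q + s = c ^+ q + c + b * k.
  rewrite sE; move: (unital_poly x c) Fq_x => r Fq_r.
  rewrite !frobD exprMn Fq_k Fq_r.
  by apply/(eq_double_pchar2 pchar2F (z := r)); ring.
have norm_s : s ^+ q * s = alpha ^+ q.+1 * k ^+ 2.
  by rewrite /s -xk exprMn [(x ^+ 2) ^+ q]exprAC !exprSr; ring.
rewrite -trace_s -norm_s.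
by apply/(eq_double_pchar2 pchar2F (z := s ^+ 2 + s ^+ q * s)); ring.
Qed.

Lemma unital_on_line_at_infinity (l3 : F) (P : vec3 F) : l3 != 0 ->
  P \in unital q alpha beta -> incident (0, 0, l3) P -> P = (0, 1, 0).
Proof.
move=> l3_neq0 /unital_cases[// | [x [y ->]]].
by rewrite /incident /= !(mul0r, add0r, mulr1) (negbTE l3_neq0).
Qed.

Section Pedal.
Hypothesis halpha : alpha != 0.
Hypothesis hbeta : ~~ inFq q beta.
Hypothesis htr : abs_trace h (alpha ^+ q.+1 / b ^+ 2) = 0.

(* An isotropic w would give z := alpha w / (b w^q) with z^q + z = 1 and
   z^2 + z = alpha^(q+1) / b^2, whose absolute trace would then be z^q + z = 1. *)
Lemma qform_neq0 (w : F) : w != 0 -> qform w != 0.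
Proof.
move=> w_neq0; apply/negP => /eqP Qw0.
have b_neq0 := trace_beta_neq0 hbeta.
have wq_neq0 : w ^+ q != 0 by rewrite expf_neq0.
pose z := alpha * w / (b * w ^+ q).
have zq : z ^+ q = alpha ^+ q * w ^+ q / (b * w).
  by rewrite /z !exprMn exprVn exprMn -{2}(eqP (inFq_trace beta)) frobK.
have trace_z : z ^+ q + z = 1.
  have : qform w == 0 by rewrite Qw0.
  rewrite /qform addr_eq0_pchar2 ?pchar2F // => /eqP Tw.
  have -> : z ^+ q + z = ((alpha * w ^+ 2) ^+ q + alpha * w ^+ 2) / (b * w ^+ q.+1).
    rewrite zq /z exprMn [(w ^+ 2) ^+ q]exprAC [w ^+ q.+1]exprSr.
    by field; rewrite b_neq0 w_neq0 wq_neq0.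
  by rewrite Tw divff // mulf_neq0 // expf_neq0.
have AS_z : z ^+ 2 + z = z * z ^+ q.
  rewrite -{2}[z]mulr1 -trace_z; apply: (eq_double_pchar2 pchar2F (z := z ^+ 2)); ring.
have norm_z : z * z ^+ q = alpha ^+ q.+1 / b ^+ 2.
  by rewrite zq /z exprSr; field; rewrite b_neq0 w_neq0.
move: htr; rewrite -norm_z -AS_z abs_trace_sqr_add ?pchar2F // trace_z.
exact/eqP/oner_neq0.
Qed.

Variable delta : F.
Hypothesis hdq : delta ^+ q = 1 + delta.

Lemma qform_affine_root (e : F) :
  e != 0 -> exists2 u, u != 0 & qform u + (e * u) ^+ q + e * u = 0.
Proof.
move=> e_neq0.
have delta_neq0 : delta != 0.
  by apply: contra_eq_neq hdq => ->; rewrite expr0n expn_eq0 addr0 /= eq_sym oner_eq0.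
pose w := delta / e; pose K := qform w.
have K_neq0 : K != 0 by rewrite qform_neq0 // mulf_neq0 ?invr_eq0.
have Fq_Kinv : inFq q K^-1 by rewrite /inFq exprVn (eqP (inFq_qform w)).
exists (K^-1 * w); first by rewrite mulf_neq0 ?invr_eq0 // mulf_neq0 ?invr_eq0.
have -> : e * (K^-1 * w) = K^-1 * delta.
  by rewrite /w; field; rewrite K_neq0 e_neq0.
rewrite (qformZ _ Fq_Kinv) exprMn hdq (eqP Fq_Kinv) -/K.
by apply: (eq_double_pchar2 pchar2F (z := K^-1 * (1 + delta))); field.
Qed.

Lemma unital_poly_second_point (m c x0 : F) :
  inFq q (unital_poly x0 (m * x0 + c)) -> m != b * x0 ^+ q ->
  exists2 x, x != x0 & inFq q (unital_poly x (m * x + c)).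
Proof.
move=> Fq_x0 m_neq; have e_neq0 : m + b * x0 ^+ q != 0.
  by rewrite addr_eq0_pchar2 ?pchar2F.
have [u u_neq0 root_u] := qform_affine_root e_neq0.
exists (x0 + u); first by rewrite -subr_eq0 addrAC subrr add0r.
have := unital_poly_line_incr m c x0 u; rewrite /= root_u => /eqP.
rewrite addr_eq0_pchar2 ?pchar2F // => Fq_d.
by rewrite -(addrK_pchar2 pchar2F (unital_poly x0 (m * x0 + c)) (unital_poly (x0 + u) _)) inFqD.
Qed.

Lemma tangent_uniq (L P P' : vec3 F) : tangent q alpha beta L ->
  P \in unital q alpha beta -> incident L P ->
  P' \in unital q alpha beta -> incident L P' -> P = P'.
Proof.
case/andP=> _ /cards1P[P0 LU].
have onL X : X \in unital q alpha beta -> incident L X -> X = P0.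
  by move=> UX LX; apply/set1P; rewrite -LU inE UX.
by move=> UP LP UP' LP'; rewrite (onL P) // (onL P').
Qed.

Lemma contact_of_tangent_through_R (x0 y0 : F) (L : vec3 F) :
  (x0, y0, 1) \in unital q alpha beta -> tangent q alpha beta L ->
  incident L (0, delta, 1) -> incident L (x0, y0, 1) ->
  b * x0 ^+ q.+1 = y0 + delta.
Proof.
case: L => [[a b'] c'] U0 tL LR L0.
have c'E : c' = b' * delta.
  by move: LR; rewrite /incident /= mulr0 add0r mulr1 addr_eq0_pchar2 ?pchar2F // eq_sym => /eqP.
have [b'0 | b'_neq0] := eqVneq b' 0.
  have L_vertical y : incident (a, b', c') (0, y, 1).
    by rewrite /incident /= c'E b'0 !(mul0r, mulr0, addr0).
  have U01 : (0, 0, 1) \in unital q alpha beta.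
    by rewrite unital_affineE /unital_poly !exprS !(mul0r, mulr0, addr0) /inFq expr0n expn_eq0.
  have U10 : (0, 1, 0) \in unital q alpha beta by rewrite inE eqxx orbT.
  have L10 : incident (a, b', c') (0, 1, 0) by rewrite /incident /= b'0 !(mul0r, mulr0, addr0).
  by have [] := tangent_uniq tL U10 L10 U01 (L_vertical 0); move/eqP; rewrite oner_eq0.
have m_c_E : c' / b' = delta by rewrite c'E mulrAC divff // mul1r.
move: (L0); rewrite incident_affineE // m_c_E => /eqP y0E.
have [aE | a_neq] := eqVneq a (b' * b * x0 ^+ q).
  rewrite y0E aE exprSr.
  by apply/esym/(eq_double_pchar2 pchar2F (z := delta)); field.
have m_neq : a / b' != b * x0 ^+ q.
  by apply: contraNneq a_neq => mE; rewrite -mulrA -mE mulrC divfK.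
have Fq_x0 : inFq q (unital_poly x0 (a / b' * x0 + delta)) by rewrite -unital_affineE -y0E.
have [x x_neq Fq_x] := unital_poly_second_point Fq_x0 m_neq.
rewrite -unital_affineE in Fq_x.
have Lx : incident (a, b', c') (x, a / b' * x + delta, 1) by rewrite incident_affineE ?m_c_E.
by have [] := tangent_uniq tL Fq_x Lx U0 L0; move/eqP; rewrite (negbTE x_neq).
Qed.

Lemma pedal_on_line (l2 l3 : F) (P : vec3 F) (c := l3 / l2) : l2 != 0 ->
  P \in pedal q alpha beta (0, delta, 1) -> incident (0, l2, l3) P ->
  exists x, [/\ P = (x, c, 1), inFq q (unital_poly x c) & x ^+ q.+1 = (c + delta) / b].
Proof.
move=> l2_neq0; rewrite inE => /andP[UP /existsP[L /and3P[tL LR LP]]] l2P.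
case/unital_cases: (UP) => [P_inf | [x [y P_aff]]].
  by move: l2P; rewrite P_inf /incident /= mulr1 !mulr0 !add0r addr0 (negbTE l2_neq0).
move: l2P; rewrite P_aff incident_affineE // !mul0r add0r => /eqP yE.
rewrite P_aff yE in UP LP; exists x; split; rewrite ?P_aff ?yE -?unital_affineE //.
by rewrite /c -(contact_of_tangent_through_R UP tL LR LP) mulrC mulKf ?trace_beta_neq0.
Qed.

Lemma card_pedal_on_line (l2 l3 : F) : l2 != 0 ->
  (#|[set P in pedal q alpha beta (0%R, delta, 1%R) | incident (0%R, l2, l3) P]| <= 2)%N.
Proof.
move=> l2_neq0; set S := [set P in _ | _].
set c := l3 / l2; set k := (c + delta) / b.
have S_affine P : P \in S ->
    exists x, [/\ P = (x, c, 1), inFq q (unital_poly x c) & x ^+ q.+1 = k].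
  by rewrite inE => /andP[]; apply: pedal_on_line.
have inj_S : {in S &, injective (fun P : vec3 F => alpha * P.1.1 ^+ 2)}.
  move=> P1 P2 /S_affine[x1 [-> _ _]] /S_affine[x2 [-> _ _]] /= /(mulfI halpha).
  by move/(fmorph_inj (pFrobenius_aut pchar2F)) ->.
rewrite -(card_in_imset inj_S).
apply: leq_trans (card_quadratic_roots (c ^+ q + c + b * k) (alpha ^+ q.+1 * k ^+ 2)).
apply/subset_leq_card/subsetP => _ /imsetP[P /S_affine[x [-> Fq_x xk]] ->].
by rewrite inE /= (unital_norm_root Fq_x xk).
Qed.
End Pedal.

End UnitalOverFq2.

Theorem lemma3p3 (h : nat) (F : finFieldType)
  (hh : (2 <= h)%N) (hF : #|F| = (2 ^ h * 2 ^ h)%N)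
  (delta v : F)
  (hdelta : ~~ inFq (2 ^ h) delta)
  (hdq : delta ^+ (2 ^ h) = 1 + delta)
  (hd2 : delta ^+ 2 = v + delta)
  (hv : inFq (2 ^ h) v) (hv1 : v != 1) (hvtr : abs_trace h v = 1)
  (alpha beta : F)
  (halpha : alpha != 0) (hbeta : ~~ inFq (2 ^ h) beta)
  (htr : abs_trace h (alpha ^+ (2 ^ h).+1 / (beta ^+ (2 ^ h) + beta) ^+ 2) = 0)
  (L : vec3 F) :
  is_point L -> incident L (1 : F, 0 : F, 0 : F) ->
  (#|[set P in pedal (2 ^ h) alpha beta (0%R : F, delta, 1%R : F) | incident L P]| <= 2)%N.
Proof.
case: L => [[l1 l2] l3] /andP[L_neq0 _] LU.
have l1_0 : l1 = 0 by move: LU; rewrite /incident /= mulr1 !mulr0 !addr0 => /eqP.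
subst l1; have [l2_0 | l2_neq0] := eqVneq l2 0; last first.
  exact: (card_pedal_on_line hF halpha hbeta htr hdq).
subst l2; have l3_neq0 : l3 != 0 by apply: contraNneq L_neq0 => ->.
apply: (@leq_trans #|[set (0 : F, 1 : F, 0 : F)]|); last by rewrite cards1.
apply/subset_leq_card/subsetP => P /setIdP[/setIdP[UP _] LP].
by rewrite (unital_on_line_at_infinity l3_neq0 UP LP) set11.
Qed.
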